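(* Let $X$ be a Hausdorff hereditarily disconnected space and $p\in X$ be such that $X-\{p\}$ is totally disconnected. Then $\mathcal{K}(X)$ is hereditarily disconnected.
   Context: $\mathcal{K}(X)$ is the set of nonempty compact subsets of $X$ with the Vietoris topology (generated by $U^+=\{A: A\subset U\}$ and $U^-=\{A: A\cap U\neq\emptyset\}$ for $U$ open in $X$). A space is hereditarily disconnected if every nonempty connected subset is a singleton; it is totally disconnected if any two distinct points can be separated by a clopen set (containing one but not the other). *)

From HB Require Import structures.
From mathcomp Require Import all_boot all_order.
From mathcomp Require Import all_classical all_reals all_analysis.
Set Implicit Arguments. Unset Strict Implicit. Unset Printing Implicit Defensive.
Local Open Scope classical_set_scope.

Definition hereditarily_disconnected {T : topologicalType} (A : set T) :=
  forall C : set T, C `<=` A -> C !=set0 -> connected C ->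
    exists x : T, C = [set x].

(** Totally disconnected (as in the paper): any two distinct points of A can be
    separated by a set which is clopen in the subspace A. *)
Definition clopen_sep_disconnected {T : topologicalType} (A : set T) :=
  forall x y : T, A x -> A y -> x <> y ->
    exists U : set T,
      [/\ (exists2 V, open V & U = A `&` V),
          (exists2 W, closed W & U = A `&` W), U x & ~ U y].

Definition hyperspace (X : topologicalType) :=
  {A : set X | A !=set0 /\ compact A}.

HB.instance Definition _ (X : topologicalType) := gen_eqMixin (hyperspace X).
HB.instance Definition _ (X : topologicalType) := gen_choiceMixin (hyperspace X).

(** Subbasic Vietoris sets: (true, U) |-> U^+ = {A | A ⊆ U},
    (false, U) |-> U^- = {A | A ∩ U ≠ ∅}, for U open in X. *)
Definition vietoris_index (X : topologicalType) := (bool * set X)%type.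

Definition vietoris_subbase (X : topologicalType)
    (i : vietoris_index X) : set (hyperspace X) :=
  if i.1 then [set A | proj1_sig A `<=` i.2]
  else [set A | proj1_sig A `&` i.2 !=set0].

Definition vietoris_dom (X : topologicalType) : set (vietoris_index X) :=
  [set i | open i.2].

HB.instance Definition _ (X : topologicalType) :=
  @isSubBaseTopological.Build (hyperspace X) (vietoris_index X)
    (@vietoris_dom X) (@vietoris_subbase X).

From HB Require Import structures.
From mathcomp Require Import all_boot all_order.
From mathcomp Require Import all_classical all_reals all_analysis.
Set Implicit Arguments. Unset Strict Implicit. Unset Printing Implicit Defensive.
Local Open Scope classical_set_scope.

(* Compacta avoiding p live in the totally disconnected space X \ {p}: a relatively
   clopen neighbourhood of a point x disjoint from a compactum B separates, in any
   connected family, the members meeting it from B, so such a family is trivial. For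
   a connected family H whose members all contain p, let O be the union of the open
   sets that are closed in the union Y of H and miss p. Applying the first case to
   the traces D ∩ V of such a set V shows that Y ∩ O lies in every member. A
   compactness argument shows that Y \ O has no nonempty relatively clopen subset
   missing p, so it is a connected subset of X containing p, hence {p}; thus every
   member equals the intersection of H. Finally, C ↦ C ∪ {p} is continuous, so it
   maps a connected family to a connected family of the second kind, i.e. to a single
   compactum; then "p ∈ C" is relatively clopen in the family, which reduces it to
   one of the two cases. *)

Section compact_separation.
Context {T : topologicalType}.

Lemma compact_directed_cover (K : set T) (P : set (set T)) :
  compact K -> (forall V, P V -> open V) -> P !=set0 ->
  (forall V W, P V -> P W -> P (V `|` W)) ->
  K `<=` \bigcup_(V in P) V -> exists2 V, P V & K `<=` V.
Proof.
move=> cK oP [V0 PV0] PU cov; apply: contrapT => noV.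
have outV V : P V -> exists x, K x /\ ~ V x.
  move=> PV; apply: contrapT => allV; apply: noV; exists V => // x Kx.
  by apply: contrapT => nVx; apply: allV; exists x.
pose F := filter_from P (fun V => K `\` V).
have FF : ProperFilter F.
  apply: filter_from_proper; last by move=> V /outV [x []]; exists x.
  apply: filter_from_filter; first by exists V0.
  move=> V W PV PW; exists (V `|` W); first exact: PU.
  by move=> x [Kx nVW]; split; split => // ?; apply: nVW; [left|right].
have [x [Kx clx]] : exists x, K x /\ cluster F x by apply: cK; exists V0 => // x [].
have [V PV Vx] := cov x Kx.
have FKV : F (K `\` V) by exists V.
have [y [[_ nVy] Vy]] := clx _ V FKV (open_nbhs_nbhs (conj (oP V PV) Vx)).
exact: nVy.
Qed.

Definition open_separated (A B : set T) :=
  exists U V, [/\ open U, open V, A `<=` U, B `<=` V & U `&` V = set0].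

Lemma open_separatedC (A B : set T) : open_separated A B -> open_separated B A.
Proof. by move=> [U [V [oU oV AU BV]]]; exists V, U; rewrite setIC. Qed.

Lemma compact_open_separated (K B : set T) : compact K ->
  (forall x, K x -> open_separated [set x] B) -> open_separated K B.
Proof.
move=> cK sepK.
pose P := [set U | open U /\ exists V, [/\ open V, B `<=` V & U `&` V = set0]].
have [||U U'|x Kx|U [oU [V [oV BV UV]]] KU] := @compact_directed_cover K P cK.
- by move=> U [].
- exists set0; split; first exact: open0.
  by exists setT; split; [exact: openT | | exact: set0I].
- move=> [oU [V [oV BV UV]]] [oU' [V' [oV' BV' UV']]]; split; first exact: openU.
  exists (V `&` V'); split; first exact: openI.
    by move=> y By; split; [exact: BV | exact: BV'].
  by apply/seteqP; split => // y [[Uy|Uy] [Vy V'y]]; [rewrite -UV | rewrite -UV'].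
- have [U [V [oU oV xU BV UV]]] := sepK x Kx.
  by exists U; [split => //; exists V | exact: xU].
- by exists U, V.
Qed.

Lemma hausdorff_compact_separated (K1 K2 : set T) : hausdorff_space T ->
  compact K1 -> compact K2 -> K1 `&` K2 = set0 -> open_separated K1 K2.
Proof.
move=> hT cK1 cK2 K12; apply: compact_open_separated => // x K1x.
apply/open_separatedC/compact_open_separated => // y K2y.
have xy : x != y.
  apply/eqP => xy; suff : (K1 `&` K2) x by rewrite K12.
  by split; rewrite // xy.
move: hT; rewrite open_hausdorff => /(_ x y xy) [[U V] /=].
rewrite !inE => -[xU yV] [oU oV UV].
exists V, U; split => //.
- by move=> z ->.
- by move=> z ->.
- by rewrite setIC; exact: UV.
Qed.

End compact_separation.

Section relative_topology.
Context {T : topologicalType}.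
Implicit Types A S : set T.

Definition rel_open A S := exists2 V, open V & forall x, A x -> (S x <-> V x).
Definition rel_closed A S := exists2 F, closed F & forall x, A x -> (S x <-> F x).

Lemma open_rel_open A S : open S -> rel_open A S.
Proof. by exists S. Qed.

Lemma rel_openC A S : rel_closed A S -> rel_open A (~` S).
Proof.
move=> [F cF SF]; exists (~` F); first exact: closed_openC.
by move=> x Ax; split => nS ?; apply: nS; apply/(SF x Ax).
Qed.

Lemma rel_closedC A S : rel_open A S -> rel_closed A (~` S).
Proof.
move=> [V oV SV]; exists (~` V); first exact: open_closedC.
by move=> x Ax; split => nS ?; apply: nS; apply/(SV x Ax).
Qed.

Lemma rel_open_subspace A S : rel_open A S -> open (S : set (subspace A)).
Proof.
move=> [V oV SV]; apply/open_subspaceP; exists V => //.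
by apply/seteqP; split => x [? Ax]; split => //; apply/(SV x Ax).
Qed.

Lemma connected_relP A : connected A <->
  (forall S, rel_open A S -> rel_closed A S -> (exists2 x, A x & S x) -> A `<=` S).
Proof.
split=> [cA S [V oV SV] [F cF SF] [x Ax Sx] | clA B [x Bx] [V oV BV] [F cF BF]].
  have AS : A `&` S = A.
    apply: cA; first by exists x.
      by exists V => //; apply/seteqP; split => y [Ay ?]; split => //; apply/(SV y Ay).
    by exists F => //; apply/seteqP; split => y [Ay ?]; split => //; apply/(SF y Ay).
  by rewrite -AS => y [].
have AB : A `<=` B.
  apply: clA.
  - exists V => // y Ay; rewrite BV; split; [by case | by split].
  - exists F => // y Ay; rewrite BF; split; [by case | by split].
  - by exists x => //; move: Bx; rewrite BV => -[].
by apply/seteqP; split => [y|y Ay]; [rewrite BV => -[] | exact: AB].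
Qed.

End relative_topology.

Section hyperspace.
Context {X : topologicalType}.
Implicit Types (U : set X) (A B C D : hyperspace X).

Definition hval C : set X := proj1_sig C.

Lemma hval_neq0 C : hval C !=set0.
Proof. exact: (proj2_sig C).1. Qed.

Lemma hval_compact C : compact (hval C).
Proof. exact: (proj2_sig C).2. Qed.

Lemma hval_inj : injective hval.
Proof. by move=> [A ?] [B ?] /= AB; exact: eq_exist. Qed.

Definition hunion (H : set (hyperspace X)) : set X := \bigcup_(C in H) hval C.

Definition hsub U : set (hyperspace X) := [set C | hval C `<=` U].
Definition hmeet U : set (hyperspace X) := [set C | hval C `&` U !=set0].

Lemma open_vietoris_subbase (i : vietoris_index X) :
  vietoris_dom i -> open (vietoris_subbase i).
Proof.
move=> Di; exists [set vietoris_subbase i]; last exact: bigcup_set1.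
by move=> _ ->; exact: finI_from1.
Qed.

Lemma open_hsub U : open U -> open (hsub U).
Proof. exact: (@open_vietoris_subbase (true, U)). Qed.

Lemma open_hmeet U : open U -> open (hmeet U).
Proof. exact: (@open_vietoris_subbase (false, U)). Qed.

Lemma vietoris_continuous (S : topologicalType) (f : S -> hyperspace X) :
  (forall U, open U -> open (f @^-1` hsub U)) ->
  (forall U, open U -> open (f @^-1` hmeet U)) -> continuous f.
Proof.
move=> fsub fmeet; apply/continuousP => W; rewrite {1}/open /= => -[Bs sBs <-].
rewrite preimage_bigcup; apply: bigcup_open => B /sBs /=.
rewrite filterI_iter_finI => -[n _]; elim: n B => [|n IH] B /=.
  case=> [->|[[[] U] oU <-]]; [exact: openT | exact: fsub | exact: fmeet].
by move=> [B1 ? [B2 ? <-]]; rewrite preimage_setI; apply: openI; apply: IH.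
Qed.

Lemma connected_hyper_image (S : topologicalType) (A : set S)
    (f : S -> hyperspace X) : connected A ->
  (forall U, open U -> rel_open A (f @^-1` hsub U)) ->
  (forall U, open U -> rel_open A (f @^-1` hmeet U)) -> connected (f @` A).
Proof.
move=> cA fsub fmeet; apply: connected_continuous_connected => //.
by apply: vietoris_continuous => U oU; apply: rel_open_subspace; [exact: fsub | exact: fmeet].
Qed.

Lemma rel_closed_hmeet (H : set (hyperspace X)) (V F : set X) : closed F ->
  (forall D x, H D -> hval D x -> (V x <-> F x)) -> rel_closed H (hmeet V).
Proof.
move=> cF VF; exists (~` hsub (~` F)).
  exact/open_closedC/open_hsub/closed_openC.
move=> D HD; split => [[y [Dy Vy]] DF | nDF].
  by apply: (DF y Dy); apply/(VF D y HD Dy).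
apply: contrapT => nDV; apply: nDF => y Dy Fy; apply: nDV.
by exists y; split => //; apply/(VF D y HD Dy).
Qed.

(* [C] is a junk default, used when [S] is empty or not compact. *)
Definition hyper_of (S : set X) C : hyperspace X :=
  if pselect (S !=set0 /\ compact S) is left SK then exist _ S SK else C.

Lemma hyper_ofE (S : set X) C : S !=set0 -> compact S -> hval (hyper_of S C) = S.
Proof. by move=> S0 cS; rewrite /hyper_of; case: pselect => // -[]. Qed.

Definition hsetU1 (p : X) C := hyper_of (hval C `|` [set p]) C.
Definition hsetI (F : set X) C := hyper_of (hval C `&` F) C.

Lemma hsetU1E p C : hval (hsetU1 p C) = hval C `|` [set p].
Proof.
apply: hyper_ofE; last exact/compactU/compact_set1/hval_compact.
by have [x Cx] := hval_neq0 C; exists x; left.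
Qed.

Lemma hsetIE F C : closed F -> hval C `&` F !=set0 -> hval (hsetI F C) = hval C `&` F.
Proof.
by move=> cF CF; apply: hyper_ofE => //; apply: compact_closedI => //; exact: hval_compact.
Qed.

Lemma connected_image_hsetU1 (H : set (hyperspace X)) (p : X) :
  connected H -> connected (hsetU1 p @` H).
Proof.
move=> cH; apply: connected_hyper_image => // U oU.
- have [Up|nUp] := pselect (U p).
    exists (hsub U); first exact: open_hsub.
    move=> D _; rewrite /preimage /hsub /= hsetU1E.
    by split => [DU y Dy|DU y [/DU //|->//]]; apply: DU; left.
  exists set0; first exact: open0.
  move=> D _; rewrite /preimage /hsub /= hsetU1E.
  by split => // DU; apply: nUp; apply: DU; right.
- have [Up|nUp] := pselect (U p).
    exists setT; first exact: openT.
    move=> D _; rewrite /preimage /hmeet /= hsetU1E.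
    by split => // _; exists p; split => //; right.
  exists (hmeet U); first exact: open_hmeet.
  move=> D _; rewrite /preimage /hmeet /= hsetU1E.
  split => [[y [[Dy|->] Uy]]|[y [Dy Uy]]] //; first by exists y.
  by exists y; split => //; left.
Qed.

Lemma connected_image_hsetI (H : set (hyperspace X)) (F : set X) :
  connected H -> closed F -> (forall D, H D -> hval D `&` F !=set0) ->
  (forall U, open U -> rel_open H [set D | hval D `&` F `&` U !=set0]) ->
  connected (hsetI F @` H).
Proof.
move=> cH cF HF Hmeet; apply: connected_hyper_image => // U oU.
- exists (hsub (U `|` ~` F)); first exact/open_hsub/openU/closed_openC.
  move=> D HD; rewrite /preimage /hsub /= (hsetIE cF (HF D HD)).
  split => [DFU y Dy|DUF y [Dy Fy]].
    by have [Fy|nFy] := pselect (F y); [left; apply: DFU | right].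
  by case: (DUF y Dy).
- have [V oV HV] := Hmeet U oU; exists V => // D HD.
  by rewrite /preimage /hmeet /= (hsetIE cF (HF D HD)); exact: HV.
Qed.

End hyperspace.

Arguments hval_compact {X} C.

Section punctured.
Variables (X : topologicalType) (p : X).
Hypotheses (hX : hausdorff_space X) (hZ : clopen_sep_disconnected (~` [set p])).

Lemma open_setC1 : open (~` [set p]).
Proof. exact/closed_openC/accessible_closed_set1/hausdorff_accessible. Qed.

Lemma punctured_clopen_nbhs (K : set X) (x : X) : compact K -> ~ K p -> ~ K x -> x <> p ->
  exists V, [/\ open V, V x, K `&` V = set0 & rel_closed (~` [set p]) V].
Proof.
move=> cK nKp nKx xp; set Z := ~` [set p].
pose clopen_at_x U := [/\ exists2 V, open V & U = Z `&` V,
  exists2 W, closed W & U = Z `&` W & U x].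
have [||O O'||O [U [[V oV UV] [W cW UW] Ux] <-] KZU] :=
  @compact_directed_cover _ K [set Z `\` U | U in clopen_at_x] cK.
- move=> _ [U [_ [W cW ->] _] <-]; rewrite setDIr setDv set0U.
  by apply: openI; [exact: open_setC1 | exact: closed_openC].
- exists (Z `\` Z), Z => //; split; [exists setT | exists setT | by []].
  + exact: openT.
  + by rewrite setIT.
  + exact: closedT.
  + by rewrite setIT.
- move=> [U [[V oV ->] [W cW UW] [_ Vx]] <-] [U' [[V' oV' ->] [W' cW' U'W'] [_ V'x]] <-].
  exists (Z `&` (V `&` V')); last by rewrite -setDIr setIACA setIid.
  split; [exists (V `&` V') | exists (W `&` W') | by split].
  + exact: openI oV oV'.
  + by [].
  + exact: closedI cW cW'.
  + by rewrite -[Z]setIid setIACA UW U'W' setIACA.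
- move=> k Kk; have kp : k <> p by move=> kp; apply: nKp; rewrite -kp.
  have xk : x <> k by move=> xk; apply: nKx; rewrite xk.
  have [U [UV UW Ux nUk]] := hZ xp kp xk.
  by exists (Z `\` U); [exists U | split].
- exists V; split => //; first by move: Ux; rewrite UV => -[].
    apply/seteqP; split => // y [Ky Vy]; have [Zy nUy] := KZU y Ky.
    by apply: nUy; rewrite UV.
  exists W => // y Zy; split => [Vy|Wy].
    have : U y by rewrite UV.
    by rewrite UW => -[].
  have : U y by rewrite UW.
  by rewrite UV => -[].
Qed.

Lemma connected_punctured_family_subset1 (K : set (hyperspace X)) :
  connected K -> (forall C, K C -> ~ hval C p) -> is_subset1 K.
Proof.
move=> cK Kp; suff sub A B : K A -> K B -> hval A `<=` hval B.
  by move=> A B KA KB; apply: hval_inj; apply/seteqP; split; exact: sub.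
move=> KA KB x Ax; apply: contrapT => nBx.
have xp : x <> p by move=> xp; apply: (Kp A KA); rewrite -xp.
have [V [oV Vx BV [F cF VF]]] :=
  punctured_clopen_nbhs (hval_compact B) (Kp B KB) nBx xp.
have KV : K `<=` hmeet V.
  apply: (connected_relP K).1 => //.
  - exact/open_rel_open/open_hmeet.
  - apply: (rel_closed_hmeet cF) => D y KD Dy; apply: VF => yp.
    by apply: (Kp D KD); rewrite -yp.
  - by exists A => //; exists x.
have [y BVy] := KV B KB.
by rewrite -[False]/(set0 y) -BV.
Qed.

Lemma connected_family_clopen_sub (H : set (hyperspace X)) (V : set X) :
  connected H -> open V -> rel_closed (hunion H) V -> ~ V p ->
  forall C, H C -> hunion H `&` V `<=` hval C.
Proof.
move=> cH oV [F cF VF] nVp C HC x [[C' HC' C'x] Vx].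
have {}VF D y : H D -> hval D y -> (V y <-> F y).
  by move=> HD Dy; apply: VF; exists D.
have HV : H `<=` hmeet V.
  apply: (connected_relP H).1 => //.
  - exact/open_rel_open/open_hmeet.
  - exact: rel_closed_hmeet cF VF.
  - by exists C' => //; exists x.
have HF D : H D -> hval D `&` F !=set0.
  by move=> HD; have [y [Dy Vy]] := HV D HD; exists y; split => //; apply/(VF D y HD Dy).
have cFH : connected (hsetI F @` H).
  apply: connected_image_hsetI => // U oU.
  exists (hmeet (V `&` U)); first exact/open_hmeet/openI.
  move=> D HD; split => -[y].
    by move=> [[Dy Fy] Uy]; exists y; split => //; split => //; apply/(VF D y HD Dy).
  by move=> [Dy [Vy Uy]]; exists y; split => //; split => //; apply/(VF D y HD Dy).
have FHp : forall D, (hsetI F @` H) D -> ~ hval D p.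
  move=> _ [D HD <-]; rewrite (hsetIE cF (HF D HD)) => -[Dp Fp].
  by apply: nVp; apply/(VF D p HD Dp).
have FC'x : hval (hsetI F C') x.
  by rewrite (hsetIE cF (HF C' HC')); split => //; apply/(VF C' x HC' C'x).
move: FC'x; rewrite (connected_punctured_family_subset1 cFH FHp (imageP _ HC') (imageP _ HC)).
by rewrite (hsetIE cF (HF C HC)) => -[].
Qed.

End punctured.

Section pointed_family.
Variables (X : topologicalType) (p : X) (H : set (hyperspace X)).
Hypotheses (hX : hausdorff_space X) (hd : hereditarily_disconnected (@setT X))
  (hZ : clopen_sep_disconnected (~` [set p])).
Hypotheses (cH : connected H) (H0 : H !=set0) (Hp : forall C, H C -> hval C p).

Let Y := hunion H.
Let E := \bigcap_(C in H) hval C.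
Let good V := [/\ open V, rel_closed Y V & ~ V p].
Let O := \bigcup_(V in good) V.

Let E_sub C : H C -> E `<=` hval C.
Proof. by move=> HC x; apply. Qed.

Let closed_E : closed E.
Proof. by apply: closed_bigI => C _; apply: compact_closed hX (hval_compact C). Qed.

Let compact_E : compact E.
Proof.
by have [C HC] := H0; exact: subclosed_compact closed_E (hval_compact C) (E_sub HC).
Qed.

Let E_sub_Y : E `<=` Y.
Proof. by have [C HC] := H0; move=> x Ex; exists C => //; exact: Ex. Qed.

Let Y_p : Y p.
Proof. by have [C HC] := H0; exists C => //; exact: Hp. Qed.

Let open_O : open O.
Proof. by apply: bigcup_open => V []. Qed.

Let O_p : ~ O p.
Proof. by move=> [V [_ _ nVp]]. Qed.

Let YO_sub_E : Y `&` O `<=` E.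
Proof.
move=> x [Yx [V [oV cV nVp] Vx]] C HC.
exact: (connected_family_clopen_sub hX hZ cH oV cV nVp HC).
Qed.

Let good_absorb (P : set X) : open P -> ~ P p -> compact (closure (Y `&` P)) ->
  closure (Y `&` P) `<=` P `|` O -> Y `&` P `<=` O.
Proof.
move=> oP nPp cpt cov.
have [V [oV [F cF VF] nVp] clV] : exists2 V, good V & closure (Y `&` P) `\` P `<=` V.
  apply: compact_directed_cover.
  - by rewrite setDE; apply: compact_closedI => //; exact: open_closedC.
  - by move=> V [].
  - exists set0; split; [exact: open0 | | by []].
    by exists set0; [exact: closed0 | by []].
  - move=> V W [oV [FV cFV VFV] nVp] [oW [FW cFW WFW] nWp].
    split; [exact: openU | | by case].
    exists (FV `|` FW); first exact: closedU.
    move=> x Yx; split => -[h|h].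
    + by left; apply/VFV.
    + by right; apply/WFW.
    + by left; apply/VFV.
    + by right; apply/WFW.
  - by move=> z [/cov [//|Oz] nPz].
have gPV : good (P `|` V).
  split; [exact: openU | | by case].
  exists (closure (Y `&` P) `|` F); first exact: closedU (@closed_closure _ _) cF.
  move=> x Yx; split => [[Px|Vx]|[clx|Fx]].
  - by left; apply: subset_closure.
  - by right; apply/VF.
  - by have [Px|nPx] := pselect (P x); [left | right; apply: clV].
  - by right; apply/VF.
by move=> x [Yx Px]; exists (P `|` V) => //; left.
Qed.

Let hval_hsetI_O D : H D -> hval (hsetI (~` O) D) = hval D `\` O.
Proof.
move=> HD; apply: hsetIE; first exact: open_closedC.
by exists p; split; [exact: Hp | exact: O_p].
Qed.

Let connected_hsetI_O : connected (hsetI (~` O) @` H).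
Proof.
apply: connected_image_hsetI => //; first exact: open_closedC.
  by move=> D HD; exists p; split; [exact: Hp | exact: O_p].
move=> U oU; have [[z [[Ez nOz] Uz]]|nEU] := pselect ((E `\` O) `&` U !=set0).
  exists setT => [|D HD]; first exact: openT.
  by split => // _; exists z; split => //; split => //; exact: E_sub Ez.
exists (hmeet (U `\` E)) => [|D HD]; first exact/open_hmeet/openI/closed_openC.
split => -[y].
  move=> [[Dy nOy] Uy]; exists y; split => //; split => // Ey.
  by apply: nEU; exists y.
move=> [Dy [Uy nEy]]; exists y; split => //; split => // Oy.
by apply: nEy; apply: YO_sub_E; split => //; exists D.
Qed.

Let Ys := Y `\` O.

Let hunion_hsetI_O : hunion (hsetI (~` O) @` H) = Ys.
Proof.
apply/seteqP; split => [x [_ [D HD <-]]|x [[D HD Dx] nOx]].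
  by rewrite hval_hsetI_O // => -[Dx nOx]; split => //; exists D.
by exists (hsetI (~` O) D); [exact: imageP | rewrite hval_hsetI_O].
Qed.

Let YsN_sub_E N : open N -> rel_closed Ys N -> ~ N p -> Ys `&` N `<=` E.
Proof.
move=> oN cN nNp x YsNx C HC.
have := connected_family_clopen_sub hX hZ connected_hsetI_O oN.
rewrite hunion_hsetI_O => /(_ cN nNp _ (imageP _ HC) x YsNx).
by rewrite hval_hsetI_O // => -[].
Qed.

(* If [N] met [Ys] at [q], then, separating [E `\` O] inside [F] from [E `\` O]
   outside [N], the set [N `&` P1] could be added to a good set, putting [q] in [O]. *)
Let YsN_eq0 N : open N -> rel_closed Ys N -> ~ N p -> Ys `&` N = set0.
Proof.
move=> oN [F cF NF] nNp; apply/seteqP; split => // q [Ysq Nq].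
have YsN_E := YsN_sub_E oN (ex_intro2 _ _ F cF NF) nNp.
have cQ : compact ((E `\` O) `&` F).
  rewrite setDE; apply: compact_closedI => //.
  by apply: compact_closedI => //; exact: open_closedC.
have cR : compact (E `\` O `\` N).
  by rewrite !setDE; apply: compact_closedI; [apply: compact_closedI|]; rewrite // closedC.
have QR : ((E `\` O) `&` F) `&` (E `\` O `\` N) = set0.
  apply/seteqP; split => // x [[[Ex nOx] Fx] [_ nNx]]; apply: nNx.
  by apply/(NF x) => //; split => //; exact: E_sub_Y.
have [P1 [P2 [oP1 oP2 QP1 RP2 P12]]] := hausdorff_compact_separated hX cQ cR QR.
have YP_E : Y `&` (N `&` P1) `<=` E.
  move=> x [Yx [Nx P1x]]; have [Ox|nOx] := pselect (O x).
    exact: YO_sub_E.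
  exact: YsN_E.
have clE : closure (Y `&` (N `&` P1)) `<=` E.
  by rewrite [E in _ `<=` E](closure_id E).1 //; exact: closureS.
have : Y `&` (N `&` P1) `<=` O.
  apply: good_absorb => //; first exact: openI.
  - by case.
  - exact: subclosed_compact (@closed_closure _ _) compact_E clE.
  move=> z clz; have [Oz|nOz] := pselect (O z); [by right | left].
  have Ysz : Ys z by split => //; exact/E_sub_Y/clE.
  have Nz : N z.
    apply: contrapT => nNz.
    have [y [[_ [_ P1y]] P2y]] :=
      clz P2 (open_nbhs_nbhs (conj oP2 (RP2 z (conj (conj (clE z clz) nOz) nNz)))).
    by rewrite -[False]/(set0 y) -P12.
  by split => //; apply: QP1; split; [split; [exact: clE|] | apply/(NF z)].
have Eq : E q := YsN_E q (conj Ysq Nq).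
move=> YPO; case: (Ysq) => Yq nOq; apply: (nOq); apply: YPO; split => //; split => //.
by apply: QP1; split; [split | exact/(NF q Ysq)].
Qed.

Let Ys_p : Ys p.
Proof. by split; [exact: Y_p | exact: O_p]. Qed.

Let Ys_clopen_avoid S : rel_open Ys S -> rel_closed Ys S -> ~ S p -> forall y, Ys y -> ~ S y.
Proof.
move=> [V oV SV] [F cF SF] nSp y Ysy Sy.
have nVp : ~ V p by move/(SV p Ys_p).
have cV : rel_closed Ys V by exists F => // x Ysx; rewrite -SV -?SF.
suff : (Ys `&` V) y by rewrite YsN_eq0.
by split => //; apply/(SV y Ysy).
Qed.

Let connected_Ys : connected Ys.
Proof.
apply/connected_relP => S oS cS [x Ysx Sx] y Ysy.
have [Sp|nSp] := pselect (S p); last by case: (Ys_clopen_avoid oS cS nSp Ysx Sx).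
by apply: contrapT; apply: (Ys_clopen_avoid (rel_openC cS) (rel_closedC oS)).
Qed.

Lemma connected_pointed_family_subset1 : is_subset1 H.
Proof.
have [z Ysz] := hd (fun _ _ => I) (ex_intro _ p Ys_p) connected_Ys.
move/seteqP: Ysz => [Ysz _].
have Ys1 x : Ys x -> x = p by move=> /Ysz ->; rewrite (Ysz p Ys_p).
suff HE C : H C -> hval C = E by move=> A B HA HB; apply: hval_inj; rewrite !HE.
move=> HC; apply/seteqP; split => [x Cx|]; last exact: E_sub.
have Yx : Y x by exists C.
have [Ox|nOx] := pselect (O x); first exact: YO_sub_E.
by rewrite (Ys1 x (conj Yx nOx)) => D HD; exact: Hp.
Qed.

End pointed_family.

Lemma connected_family_avoid (X : topologicalType) (p : X) (K : set (hyperspace X)) :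
  hausdorff_space X -> hereditarily_disconnected (@setT X) ->
  clopen_sep_disconnected (~` [set p]) -> connected K ->
  forall B, K B -> ~ hval B p -> forall C, K C -> ~ hval C p.
Proof.
move=> hX hd hZ cK B KB nBp.
have sameU1 C : K C -> hval C `|` [set p] = hval B `|` [set p].
  move=> KC; rewrite -!hsetU1E; congr hval.
  apply: (connected_pointed_family_subset1 hX hd hZ (connected_image_hsetU1 (p:=p) cK)
    _ _ (imageP _ KC) (imageP _ KB)).
  - by exists (hsetU1 p B); exact: imageP.
  - by move=> _ [D _ <-]; rewrite hsetU1E; right.
have meetE D : K D -> hmeet (~` hval B) D <-> hval D p.
  move=> KD; split => [[y [Dy nBy]]|Dp]; last by exists p.
  have : (hval B `|` [set p]) y by rewrite -(sameU1 D KD); left.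
  by case=> [/nBy []|<-].
suff KZ : K `<=` hsub (~` [set p]) by move=> C KC Cp; exact: KZ C KC p Cp erefl.
apply: (connected_relP K).1 => //.
- exact/open_rel_open/open_hsub/(open_setC1 p hX).
- exists (~` hmeet (~` hval B)).
    exact/open_closedC/open_hmeet/closed_openC/(compact_closed hX)/hval_compact.
  move=> D KD; split => [DZ /(meetE D KD) Dp|nDp x Dx xp]; first exact: DZ p Dp erefl.
  by apply: nDp; apply/(meetE D KD); rewrite -xp.
- by exists B => // x Bx xp; rewrite xp in Bx.
Qed.

Theorem proposition5p5 (X : topologicalType) (p : X) :
  hausdorff_space X ->
  hereditarily_disconnected (@setT X) ->
  clopen_sep_disconnected (~` [set p]) ->
  hereditarily_disconnected (@setT (hyperspace X)).
Proof.
move=> hX hd hZ K _ [A KA] cK.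
suff K1 : is_subset1 K by exists A; apply/seteqP; split => [C KC|_ ->] //; exact: K1.
have [[B KB nBp]|Kp] := pselect (exists2 B, K B & ~ hval B p).
  apply: (connected_punctured_family_subset1 hX hZ cK).
  exact: connected_family_avoid KB nBp.
apply: (connected_pointed_family_subset1 hX hd hZ cK); first by exists A.
by move=> C KC; apply: contrapT => nCp; apply: Kp; exists C.
Qed.
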